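(* Let $p \geq 5$ be a prime and let $G$ be a group of order $p^7$ such that $\gamma_2(G)$ is an abelian subgroup of order $p^5$ with $d(\gamma_2(G)) = 4$. Then: (i) the nilpotency class of $G$ is at least $5$; (ii) if $p \geq 7$, then the nilpotency class of $G$ is exactly $5$.
   Context: $\gamma_2(G)$ denotes the commutator subgroup of $G$ and $d(X)$ the minimal number of generators of a finite group $X$. *)

From mathcomp Require Import all_boot all_fingroup all_solvable.
Set Implicit Arguments. Unset Strict Implicit. Unset Printing Implicit Defensive.
Local Open Scope group_scope.

(* d(A): the minimal number of generators of a group A, i.e. the least
   cardinality of a subset S with <<S>> = A.  (A itself generates A when A
   is a group, so the arg min is taken over a non-empty range.) *)
Definition min_gen_set (gT : finGroupType) (A : {set gT}) : {set gT} :=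
  [arg min_(S < A | <<S>> == A) #|S|].

Definition dgen (gT : finGroupType) (A : {set gT}) : nat := #|min_gen_set A|.

(* Let M = G^`(1). As M is abelian of order p^5 and rank 4, 'Ohm_1(M) has order
   p^4 and 'Mho^1(M) has order p; being normal of order p, 'Mho^1(M) is central.
   Hence [m, g]^p = [m^p, g] = 1, so 'L_3(G) has exponent p. Since 'Phi(G) = M
   has index p^2, G = <a, b>, and M = <c>'L_3(G) for c = [a, b], so that c^p is a
   nontrivial central element. As long as 'L_p.+1(G) = 1, expanding (g [g, h])^p
   in M, on which g acts as 1 + (u |-> [u, g]), gives the Hall relations
   [a^p, b] = c^p and [b^p, a] = c^-p.
   Each 'L_k.+1(G) / 'L_k.+2(G) is generated by the commutators with a and b of
   generators of 'L_k(G) / 'L_k.+1(G). If the class were at most 4, then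
   p^4 <= |'L_3| <= p^2 |'L_4|, while a^p and b^p lie in 'L_3 \ 'L_4 and generate
   'L_3 modulo 'L_4, so that 'L_4 <= <c^p> has order at most p. If p >= 7 and the
   class were at least 6, every factor of the lower central series from M on has
   order p, c^p lies in 'L_6, and a^p generates 'L_5 modulo 'L_6, so 'L_5
   centralises a; yet b^p lies in 'L_5 and [b^p, a] = c^-p. *)

From mathcomp Require Import all_boot all_fingroup all_solvable ssralg zify.
Set Implicit Arguments. Unset Strict Implicit. Unset Printing Implicit Defensive.
Import GRing.Theory.
Local Open Scope group_scope.

Section GeneralGroupFacts.

Variable gT : finGroupType.
Implicit Types (p : nat) (x y : gT) (A B : {set gT}) (G H K L N : {group gT}).

Lemma card_proper_pgroup p H K : p.-group K -> H \proper K -> p * #|H| <= #|K|.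
Proof.
move=> pK prHK; have pH := pgroupS (proper_sub prHK) pK.
have ntK : K :!=: 1 by rewrite -cardG_gt1 (leq_ltn_trans (cardG_gt0 H) (proper_card prHK)).
have [/prime_gt1 p_gt1 _ _] := pgroup_pdiv pK ntK.
have := proper_card prHK; rewrite (card_pgroup pK) (card_pgroup pH) -expnS.
by rewrite (ltn_exp2l _ _ p_gt1) (leq_exp2l _ _ p_gt1).
Qed.

Lemma pgroup_index_le_p_eq p H L K : p.-group K -> H \proper L -> L \subset K ->
  #|K| <= p * #|H| -> L :=: K.
Proof.
move=> pK prHL sLK leK; apply/eqP; rewrite eqEcard sLK.
exact: leq_trans leK (card_proper_pgroup (pgroupS sLK pK) prHL).
Qed.

Lemma card_joing_set1_le n x H : 0 < n -> x \in 'N(H) -> x ^+ n \in H ->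
  #|[set x] <*> H| <= n * #|H|.
Proof.
move=> n_gt0 nHx Hxn; rewrite -joing_idl norm_joinEl ?cycle_subG //.
have := mul_cardG <[x]> H; rewrite -orderE => defxH.
have le_xI : #[x ^+ n] <= #|<[x]> :&: H|.
  by rewrite orderE subset_leq_card // subsetI cycleX cycle_subG.
have le_x : #[x] <= n * #[x ^+ n].
  rewrite orderXgcd -{1}(divnK (dvdn_gcdl #[x] n)) mulnC leq_mul //.
  by rewrite dvdn_leq ?dvdn_gcdr.
rewrite -(leq_pmul2r (cardG_gt0 (<[x]> :&: H)%G)) -defxH mulnAC.
by rewrite leq_pmul2r // (leq_trans le_x) // leq_pmul2l.
Qed.

Lemma commXgg x n : [~ x ^+ n, x] = 1.
Proof. by apply/eqP/commgP/commute_sym/commuteX. Qed.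

Lemma comm_lcn_last k G t x : 'L_k.+2(G) = 1 -> t \in 'L_k.+1(G) -> x \in G ->
  [~ t, x] = 1.
Proof. by move=> Lk1 Lt Gx; apply/set1P; rewrite -[[set 1]]Lk1 mem_commg. Qed.

Lemma joing_set1_sub_cent1 x u H : [~ u, x] = 1 -> H \subset 'C[x] ->
  [set u] <*> H \subset 'C[x].
Proof. by move=> ux sHx; rewrite join_subG sHx sub1set andbT; apply/cent1P/commgP/eqP. Qed.

Lemma commg_gen_subG A B N : A \subset 'N(N) -> B \subset 'N(N) ->
  [~: A, B] \subset N -> [~: <<A>>, <<B>>] \subset N.
Proof.
move=> nNA nNB sABN.
rewrite -quotient_cents2 ?gen_subG // !quotient_gen // cent_gen gen_subG.
by rewrite quotient_cents2.
Qed.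

Lemma der1_gen2_sub x y N : [set x; y] \subset 'N(N) -> [~ x, y] \in N ->
  <<[set x; y]>>^`(1) \subset N.
Proof.
move=> nNxy Nxy; rewrite derg1 commg_gen_subG // gen_subG.
apply/subsetP=> _ /imset2P[s t /set2P[]-> /set2P[]-> ->];
  by rewrite ?commgg ?group1 // -invg_comm groupV.
Qed.

Lemma sub_lcn_norm k G H : 'L_k.+2(G) \subset H -> H \subset 'L_k.+1(G) ->
  G \subset 'N(H).
Proof. by move=> sLH sHL; rewrite -commg_subr commGC (subset_trans _ sLH) ?commSg. Qed.

Lemma prime_normal_sub_center G H : nilpotent G -> H <| G -> prime #|H| ->
  H \subset 'Z(G).
Proof.
move=> nilG nsHG prH; have [// | tiHZ] := prime_subgroupVti 'Z(G) prH.
have ntH : H :!=: 1 by rewrite -cardG_gt1 prime_gt1.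
by have := meet_center_nil nilG nsHG ntH; rewrite setIC tiHZ eqxx.
Qed.

Lemma card_Phi_noncyclic p G : p.-group G -> ~~ cyclic G ->
  p ^ 2 * #|'Phi(G)| <= #|G|.
Proof.
move=> pG ncG; have ntG : G :!=: 1 by apply: contraNneq ncG => ->; apply: cyclic1.
have [p_pr _ _] := pgroup_pdiv pG ntG.
have ncQ : ~~ cyclic (G / 'Phi(G)) by apply: contra ncG; apply: Phi_quotient_cyclic.
rewrite -(Lagrange (Phi_sub G)) -card_quotient ?gFnorm // mulnC leq_pmul2l ?cardG_gt0 //.
have oQ := card_pgroup (quotient_pgroup 'Phi(G) pG).
rewrite oQ (leq_exp2l _ _ (prime_gt1 p_pr)); case: (logn _ _) oQ => [|[|//]] oQ.
  by case/negP: ncQ; rewrite (card1_trivg oQ) cyclic1.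
by case/negP: ncQ; apply: prime_cyclic; rewrite oQ.
Qed.

Lemma Phi_index_p2_gen2 p G : p.-group G -> ~~ cyclic G ->
  #|G| <= p ^ 2 * #|'Phi(G)| -> exists a b, <<[set a; b]>> = G.
Proof.
move=> pG ncG leG; have ntG : G :!=: 1 by apply: contraNneq ncG => ->; apply: cyclic1.
set F := 'Phi(G); have sFG : F \subset G := Phi_sub G.
have /properP[_ [a Ga Fa']] := Phi_proper ntG.
have sFaG : F <*> [set a] \subset G by rewrite join_subG sFG sub1set.
have /properP[_ [b Gb Fab']] : F <*> [set a] \proper G.
  rewrite properEneq sFaG andbT; apply: contraNneq ncG => /Phi_nongen <-.
  exact: cycle_cyclic.
have sFabG : F <*> [set a; b] \subset G by rewrite join_subG sFG subUset !sub1set Ga.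
have prF_Fa : F \proper F <*> [set a].
  apply/properP; split; first exact: joing_subl.
  by exists a; rewrite // mem_gen // !inE eqxx orbT.
have prFa_Fab : F <*> [set a] \proper F <*> [set a; b].
  apply/properP; split; first by rewrite genS // setUS // sub1set !inE eqxx.
  by exists b; rewrite // mem_gen // !inE eqxx !orbT.
exists a, b; apply: Phi_nongen; apply/eqP; rewrite eqEcard sFabG (leq_trans leG) //.
rewrite expnS expn1 -mulnA.
rewrite (leq_trans _ (card_proper_pgroup (pgroupS sFabG pG) prFa_Fab)) //.
by rewrite leq_mul2l card_proper_pgroup ?orbT // (pgroupS sFaG pG).
Qed.

End GeneralGroupFacts.

Lemma hockey_stick n i : \sum_(0 <= k < n) 'C(k, i) = 'C(n, i.+1).
Proof.
elim: n => [|n IHn]; first by rewrite big_nil.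
by rewrite big_nat_recr //= IHn binS addnC.
Qed.

Section MetabelianPowerCommutator.

Variables (gT : finGroupType) (G : {group gT}).
Hypothesis abG' : abelian G^`(1).

Import FiniteModule.
Local Notation V := (fmod_of abG').

Let nG'G : G \subset 'N(G^`(1)). Proof. exact: der_norm. Qed.

Definition fcomm (g : gT) (u : V) : V := (actr u g - u)%R.

Lemma actr_fcomm g u : actr u g = (u + fcomm g u)%R.
Proof. by rewrite /fcomm addrC subrK. Qed.

Lemma fmval_fcomm g u : g \in G -> val (fcomm g u) = [~ val u, g].
Proof.
move=> Gg; have nG'g := subsetP nG'G g Gg.
rewrite fmvalA fmvalN fmvalJ // commgEl.
by apply: (centsP abG'); rewrite ?groupV ?memJ_norm ?fmodP.
Qed.

Lemma fmval_iter_fcomm g u i : g \in G -> val (iter i (fcomm g) u) \in 'L_i.+2(G).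
Proof.
move=> Gg; elim: i => [|i IHi]; first exact: fmodP.
by rewrite iterS fmval_fcomm // lcnSn mem_commg.
Qed.

Lemma actr_expg_binomial g (u : V) k n : g \in G -> k < n ->
  actr u (g ^+ k) = (\sum_(0 <= i < n) iter i (fcomm g) u *+ 'C(k, i))%R.
Proof.
move=> Gg; have nG'g := subsetP nG'G g Gg.
elim: k n => [|k IHk] [|n] //= ltkn.
  rewrite big_nat_recl //= big1 => [|i _]; last by rewrite bin0n mulr0n.
  by rewrite addr0 mulr1n actr1.
rewrite expgSr actrM ?groupX // (IHk n.+1) 1?ltnW // actr_sum.
under eq_bigr => i _ do rewrite actZr actr_fcomm mulrnDl.
rewrite big_split /= big_nat_recl // [in X in (_ + X)%R]big_nat_recr //=.
rewrite (@bin_small k n) // mulr0n addr0 big_nat_recl //= !bin0 -addrA; congr (_ + _)%R.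
by rewrite -big_split; apply: eq_bigr => i _; rewrite binS mulrnDr.
Qed.

Lemma sum_actr_expg g (u : V) n : g \in G ->
  (\sum_(0 <= k < n) actr u (g ^+ k) =
     \sum_(0 <= i < n) iter i (fcomm g) u *+ 'C(n, i.+1))%R.
Proof.
move=> Gg; rewrite (eq_big_nat _ _ (fun k ltkn => actr_expg_binomial u Gg (andP ltkn).2)).
by rewrite exchange_big_nat; apply: eq_bigr => i _; rewrite sumrMnr hockey_stick.
Qed.

Lemma expgM_der1 g d n : g \in G -> d \in G^`(1) ->
  (g * d) ^+ n = g ^+ n * val (\sum_(0 <= k < n) actr (fmod abG' d) (g ^+ k))%R.
Proof.
move=> Gg G'd; have nG'g := subsetP nG'G g Gg.
elim: n => [|n IHn]; first by rewrite big_nil !expg0 mulg1.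
rewrite big_nat_recl // expgSr IHn.
under eq_bigr => k _ do rewrite expgSr actrM ?groupX //.
rewrite -actr_sum expg0 actr1 fmvalA fmvalJ // fmodK // [in RHS]expgSr -!mulgA.
congr (_ * _); rewrite (centsP abG' d) ?memJ_norm ?fmodP //.
by rewrite !mulgA mulgV mul1g.
Qed.

Lemma sum_actr_expg_prime p g (u : V) : prime p -> g \in G -> 'L_p.+1(G) = 1 ->
    {in 'L_3(G), forall t, t ^+ p = 1} ->
  (\sum_(0 <= k < p) actr u (g ^+ k) = u *+ p)%R.
Proof.
move=> p_pr Gg Lp1 expL3; rewrite sum_actr_expg //.
case: p p_pr Lp1 expL3 => // p p_pr Lp1 expL3.
rewrite big_nat_recl //= bin1 big1 ?addr0 // => i _; rewrite -iterS.
apply: val_inj; rewrite fmvalZ fmval0.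
have Lw := fmval_iter_fcomm u i.+1 Gg.
have [lt_ip | le_pi] := ltnP i.+2 p.+1.
  have /dvdnP[q ->] : p.+1 %| 'C(p.+1, i.+2) by rewrite prime_dvd_bin.
  rewrite mulnC expgM expL3 ?expg1n //.
  by apply: subsetP Lw; apply: lcn_sub_leq.
have [eq_ip | lt_pi] := eqVneq i.+2 p.+1.
  by move: Lw; rewrite eq_ip Lp1 => /set1P ->; rewrite expg1n.
by rewrite bin_small ?expg0 // ltn_neqAle eq_sym lt_pi.
Qed.

Lemma commXg_metabelian p g h : prime p -> g \in G -> h \in G ->
    'L_p.+1(G) = 1 -> {in 'L_3(G), forall t, t ^+ p = 1} ->
  [~ g ^+ p, h] = [~ g, h] ^+ p.
Proof.
move=> p_pr Gg Gh Lp1 expL3; have G'gh : [~ g, h] \in G^`(1) by rewrite mem_commg.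
rewrite commgEl conjXg conjg_mulR expgM_der1 // sum_actr_expg_prime //.
by rewrite fmvalZ fmodK // mulKg.
Qed.

End MetabelianPowerCommutator.

Section AbelianDerivedSubgroupOfRank4.

Variables (gT : finGroupType) (p : nat) (G : {group gT}).
Hypotheses (p_pr : prime p) (oG : #|G| = (p ^ 7)%N) (abG' : abelian G^`(1))
  (oG' : #|G^`(1)| = (p ^ 5)%N) (rG' : 'r(G^`(1)) = 4).

Let p_gt1 : 1 < p. Proof. exact: prime_gt1. Qed.
Let p_gt0 : 0 < p. Proof. exact: prime_gt0. Qed.
Let pG : p.-group G. Proof. by rewrite /pgroup oG pnatX pnat_id. Qed.
Let pG' : p.-group G^`(1). Proof. exact: pgroupS (der_sub 1 G) pG. Qed.
Let nilG : nilpotent G. Proof. exact: pgroup_nil pG. Qed.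
Let pL k : p.-group 'L_k(G). Proof. exact: pgroupS (lcn_sub k G) pG. Qed.

Lemma card_Ohm1_der1 : #|'Ohm_1(G^`(1))| = (p ^ 4)%N.
Proof.
rewrite (card_pgroup (pgroupS (Ohm_sub 1 _) pG')).
by rewrite -(rank_abelian_pgroup pG' abG') rG'.
Qed.

Lemma Mho1_der1_sub_center : 'Mho^1(G^`(1)) \subset 'Z(G).
Proof.
apply: prime_normal_sub_center nilG (gFnormal_trans _ (der_normal 1 G)) _.
have := mul_card_Ohm_Mho_abelian 1 abG'; rewrite card_Ohm1_der1 oG' (expnSr p 4).
by move/eqP; rewrite eqn_pmul2l ?expn_gt0 ?p_gt0 // => /eqP ->.
Qed.

Lemma expg_der1_center m : m \in G^`(1) -> m ^+ p \in 'Z(G).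
Proof.
move=> G'm; apply: (subsetP Mho1_der1_sub_center); rewrite -[p]expn1.
exact: Mho_p_elt (mem_p_elt pG' G'm).
Qed.

Let Ohm1_der1P m : reflect (m \in G^`(1) /\ m ^+ p = 1) (m \in 'Ohm_1(G^`(1))).
Proof. by rewrite (OhmEabelian pG' (abelianS (Ohm_sub 1 _) abG')) expn1; apply: LdivP. Qed.

Lemma lcn3_sub_Ohm1_der1 : 'L_3(G) \subset 'Ohm_1(G^`(1)).
Proof.
rewrite /= gen_subG; apply/subsetP=> _ /imset2P[m g G'm Gg ->].
have G'mg : [~ m, g] \in G^`(1).
  by rewrite commgEl groupM ?groupV // memJ_norm // (subsetP (der_norm 1 G)).
apply/Ohm1_der1P; split=> //; rewrite -commXg; last exact: (centsP abG').
by have /centerP[_ cGmp] := expg_der1_center G'm; apply/eqP/commgP/cGmp.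
Qed.

Lemma expg_lcn3 t : t \in 'L_3(G) -> t ^+ p = 1.
Proof. by move/(subsetP lcn3_sub_Ohm1_der1)/Ohm1_der1P=> []. Qed.

Let ntG' : G^`(1) != 1.
Proof. by rewrite -cardG_gt1 oG' (ltn_exp2l 0). Qed.

Let ncG : ~~ cyclic G.
Proof. by apply: contra ntG' => /cyclic_abelian/derG1P ->. Qed.

Lemma Phi_der1 : 'Phi(G) = G^`(1).
Proof.
have sG'Phi : G^`(1) \subset 'Phi(G) by rewrite (Phi_joing pG) joing_subl.
apply/eqP; rewrite eq_sym eqEcard sG'Phi oG'.
by rewrite -(@leq_pmul2l (p ^ 2)) ?expn_gt0 ?p_gt0 // -expnD -oG card_Phi_noncyclic.
Qed.

Lemma expg_der1 g : g \in G -> g ^+ p \in G^`(1).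
Proof.
move=> Gg; rewrite -Phi_der1 (Phi_joing pG) mem_gen // inE -[p]expn1.
by rewrite Mho_p_elt ?orbT // (mem_p_elt pG).
Qed.

Lemma two_generated : exists a b, <<[set a; b]>> = G.
Proof.
apply: (Phi_index_p2_gen2 pG ncG).
by rewrite Phi_der1 oG oG' -expnD.
Qed.

Lemma joing_set1_lcn k w : #|'L_k.+1(G)| <= p * #|'L_k.+2(G)| ->
  w \in 'L_k.+1(G) -> w \notin 'L_k.+2(G) -> [set w] <*> 'L_k.+2(G) = 'L_k.+1(G).
Proof.
move=> leL Lw L'w; apply: (pgroup_index_le_p_eq (pL _) _ _ leL).
  apply/properP; split; first exact: joing_subr.
  by exists w; rewrite // mem_gen // !inE eqxx.
by rewrite join_subG sub1set Lw lcn_subS.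
Qed.

Section Generators.

Variables a b : gT.
Hypothesis defG : <<[set a; b]>> = G.

Let Ga : a \in G. Proof. by rewrite -defG mem_gen // !inE eqxx. Qed.
Let Gb : b \in G. Proof. by rewrite -defG mem_gen // !inE eqxx orbT. Qed.
Let G'c : [~ a, b] \in G^`(1). Proof. exact: mem_commg. Qed.
Let Gc : [~ a, b] \in G. Proof. exact: groupR. Qed.

Let comm_center t x : t \in 'Z(G) -> x \in G -> [~ t, x] = 1.
Proof. by case/centerP=> _ cGt Gx; apply/eqP/commgP/cGt. Qed.

Lemma lcn_sub_gen k (T : {set gT}) (N : {group gT}) :
    G \subset 'N(N) -> 'L_k.+3(G) \subset N -> T \subset G ->
    {in T, forall t, [~ t, a] \in N /\ [~ t, b] \in N} ->
  'L_k.+1(G) \subset T <*> 'L_k.+2(G) -> 'L_k.+2(G) \subset N.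
Proof.
move=> nNG sLN sTG TabN sLT; rewrite lcnSn -{2}defG.
apply: subset_trans (commSg _ sLT) _; apply: commg_gen_subG.
- by rewrite (subset_trans _ nNG) // subUset sTG lcn_sub.
- by rewrite (subset_trans _ nNG) // -defG subset_gen.
rewrite gen_subG; apply/subsetP=> _ /imset2P[t x /setUP[Tt | Lt] /set2P[]-> ->].
- by case: (TabN t Tt).
- by case: (TabN t Tt).
- by rewrite (subsetP sLN) // lcnSn mem_commg.
- by rewrite (subsetP sLN) // lcnSn mem_commg.
Qed.

Lemma der1_sub_comm_lcn3 : G^`(1) \subset [set [~ a, b]] <*> 'L_3(G).
Proof.
have nNG : G \subset 'N([set [~ a, b]] <*> 'L_3(G)).
  by apply: (sub_lcn_norm (k := 1)); rewrite ?joing_subr // join_subG sub1set G'c lcn_subS.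
rewrite -{1}defG der1_gen2_sub ?mem_gen ?setU11 //.
by apply: subset_trans nNG; rewrite -defG subset_gen.
Qed.

Lemma comm_expg_neq1 : [~ a, b] ^+ p != 1.
Proof.
apply/negP=> /eqP cp1.
have : G^`(1) \subset 'Ohm_1(G^`(1)).
  apply: subset_trans der1_sub_comm_lcn3 _.
  by rewrite join_subG lcn3_sub_Ohm1_der1 andbT sub1set; apply/Ohm1_der1P.
move/subset_leq_card; rewrite card_Ohm1_der1 oG' leq_exp2l //.
Qed.

Lemma comm_expg_center : [~ a, b] ^+ p \in 'Z(G).
Proof. exact: expg_der1_center. Qed.

Section HallRelations.

Hypothesis Lp1 : 'L_p.+1(G) = 1.

Lemma comm_expgl : [~ a ^+ p, b] = [~ a, b] ^+ p.
Proof. exact: commXg_metabelian expg_lcn3. Qed.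

Lemma comm_expgr : [~ b ^+ p, a] = ([~ a, b] ^+ p)^-1.
Proof. by rewrite (commXg_metabelian abG' p_pr Gb Ga Lp1 expg_lcn3) -expVgn invg_comm. Qed.

Lemma comm_expg_lcn3 : [~ a, b] ^+ p \in 'L_3(G).
Proof. by rewrite -comm_expgl mem_commg ?expg_der1. Qed.

End HallRelations.

Section ClassAtMostFour.

Hypotheses (p_ge5 : 5 <= p) (L5 : 'L_5(G) = 1).
Local Notation z := ([~ a, b] ^+ p).

Let Lp1 : 'L_p.+1(G) = 1. Proof. by apply/trivgP; rewrite -L5 lcn_sub_leq // leqW. Qed.
Let L3z : z \in 'L_3(G). Proof. exact: comm_expg_lcn3 Lp1. Qed.

Let lcn4_sub_cent1 x : x \in G -> 'L_4(G) \subset 'C[x].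
Proof. by move=> Gx; apply/subsetP=> t L4t; apply/cent1P/commgP/eqP/(comm_lcn_last L5). Qed.

Lemma card_lcn3_ge : p ^ 4 <= #|'L_3(G)|.
Proof.
have nL3c : [~ a, b] \in 'N('L_3(G)) by rewrite (subsetP (lcn_norm 3 G)).
have := leq_trans (subset_leq_card der1_sub_comm_lcn3) (card_joing_set1_le p_gt0 nL3c L3z).
by rewrite oG' expnS leq_pmul2l.
Qed.

Lemma card_lcn3_le : #|'L_3(G)| <= p ^ 2 * #|'L_4(G)|.
Proof.
set ca := [~ [~ a, b], a]; set cb := [~ [~ a, b], b].
have L3ca : ca \in 'L_3(G) by rewrite mem_commg.
have L3cb : cb \in 'L_3(G) by rewrite mem_commg.
have sL3N : 'L_3(G) \subset [set ca; cb] <*> 'L_4(G).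
  apply: (lcn_sub_gen (k := 1) (T := [set [~ a, b]])); rewrite ?joing_subr ?sub1set //.
  - apply: (sub_lcn_norm (k := 2)); rewrite ?joing_subr //.
    by rewrite join_subG subUset !sub1set L3ca L3cb lcn_subS.
  - by move=> _ /set1P->; split; rewrite mem_gen // !inE eqxx ?orbT.
  exact: der1_sub_comm_lcn3.
have nNG : G \subset 'N([set cb] <*> 'L_4(G)).
  by apply: (sub_lcn_norm (k := 2)); rewrite ?joing_subr // join_subG sub1set L3cb lcn_subS.
apply: leq_trans (subset_leq_card sL3N) _.
have -> : [set ca; cb] <*> 'L_4(G) = [set ca] <*> ([set cb] <*> 'L_4(G)).
  rewrite [X in [set ca] <*> X]joingE joing_idr !joingE; congr <<_>>.
  by apply/setP=> x; rewrite !inE orbA.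
rewrite expnS expn1 -mulnA.
apply: leq_trans (card_joing_set1_le p_gt0 _ _) _.
- by rewrite (subsetP nNG) ?groupR.
- by rewrite expg_lcn3.
rewrite leq_pmul2l // card_joing_set1_le ?expg_lcn3 //.
by rewrite (subsetP (lcn_norm 4 G)) ?groupR.
Qed.

Lemma mem_lcn3 w : w \in G^`(1) -> [~ w, a] \in <[z]> -> [~ w, b] \in <[z]> ->
  w \in 'L_3(G).
Proof.
move=> G'w wa wb; apply: contraT => L3'w.
set N := ([set z] <*> 'L_4(G))%G.
have nNG : G \subset 'N(N).
  by apply: (sub_lcn_norm (k := 2)); rewrite ?joing_subr // join_subG sub1set L3z lcn_subS.
have zN : <[z]> \subset N by rewrite genS // subsetUl.
have defL2 : [set w] <*> 'L_3(G) = 'L_2(G).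
  apply: (joing_set1_lcn (k := 1) _ G'w L3'w).
  by rewrite lcn2 oG' expnS leq_pmul2l ?card_lcn3_ge.
have sL3N : 'L_3(G) \subset N.
  apply: (lcn_sub_gen (k := 1) (T := [set w])); rewrite ?joing_subr ?defL2 //.
    by rewrite sub1set (subsetP (der_sub 1 G)).
  by move=> _ /set1P->; rewrite !(subsetP zN).
have L4_1 : 'L_4(G) = 1.
  apply/trivgP; apply: (lcn_sub_gen (k := 2) (T := [set z])); rewrite ?L5 ?norms1 //.
  - by rewrite sub1set (subsetP (lcn_sub 3 G)).
  by move=> _ /set1P->; split; rewrite comm_center ?group1 ?comm_expg_center.
have leN : #|N| <= p * #|'L_4(G)|.
  apply: card_joing_set1_le; rewrite ?(expg_lcn3 L3z) //.
  by rewrite (subsetP (lcn_norm 4 G)) ?(subsetP (lcn_sub 3 G)).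
have := leq_trans card_lcn3_ge (leq_trans (subset_leq_card sL3N) leN).
by rewrite L4_1 cards1 muln1 -{2}(expn1 p) leq_exp2l.
Qed.

Lemma joing_set2_lcn3 u v : u \in 'L_3(G) -> v \in 'L_3(G) ->
  u \notin 'L_4(G) -> v \notin [set u] <*> 'L_4(G) -> [set u; v] <*> 'L_4(G) = 'L_3(G).
Proof.
move=> L3u L3v L4'u UL4'v.
have sUL3 : [set u] <*> 'L_4(G) \subset 'L_3(G) by rewrite join_subG sub1set L3u lcn_subS.
have sUVL3 : [set u; v] <*> 'L_4(G) \subset 'L_3(G).
  by rewrite join_subG subUset !sub1set L3u L3v lcn_subS.
have prL4U : 'L_4(G) \proper [set u] <*> 'L_4(G).
  by apply/properP; split; [apply: joing_subr | exists u; rewrite // mem_gen ?setU11].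
have prUUV : [set u] <*> 'L_4(G) \proper [set u; v] <*> 'L_4(G).
  apply/properP; split; first by rewrite genS // setSU // sub1set setU11.
  by exists v; rewrite // mem_gen // !inE eqxx orbT.
apply/eqP; rewrite eqEcard sUVL3 (leq_trans card_lcn3_le) // expnS expn1 -mulnA.
apply: leq_trans (card_proper_pgroup (pgroupS sUVL3 (pL 3)) prUUV).
by rewrite leq_pmul2l // (card_proper_pgroup (pgroupS sUL3 (pL 3))).
Qed.

Lemma class_at_most_4_absurd : False.
Proof.
set u := a ^+ p; set v := b ^+ p.
have ua : [~ u, a] = 1 := commXgg a p.
have vb : [~ v, b] = 1 := commXgg b p.
have ub : [~ u, b] = z := comm_expgl Lp1.
have va : [~ v, a] = z^-1 := comm_expgr Lp1.
have z_neq1 : z != 1 := comm_expg_neq1.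
have L3u : u \in 'L_3(G).
  by apply: mem_lcn3; rewrite ?expg_der1 ?ua ?ub ?group1 ?cycle_id.
have L3v : v \in 'L_3(G).
  by apply: mem_lcn3; rewrite ?expg_der1 ?va ?vb ?group1 ?groupV ?cycle_id.
have L4'u : u \notin 'L_4(G) by apply: contra z_neq1 => L4u; rewrite -ub (comm_lcn_last L5).
have UL4'v : v \notin [set u] <*> 'L_4(G).
  apply: contra z_neq1 => /(subsetP (joing_set1_sub_cent1 ua (lcn4_sub_cent1 Ga))).
  by move/cent1P/commgP; rewrite va invg_eq1.
have sL4z : 'L_4(G) \subset <[z]>.
  apply: (lcn_sub_gen (k := 2) (T := [set u; v])); rewrite ?L5 ?sub1G ?joing_set2_lcn3 //.
  - by apply: normal_norm; apply: sub_center_normal; rewrite cycle_subG comm_expg_center.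
  - by rewrite subUset !sub1set !groupX.
  by move=> _ /set2P[]->; rewrite ?ua ?ub ?va ?vb ?group1 ?groupV ?cycle_id.
have le_z : #|<[z]>| <= p by rewrite -orderE dvdn_leq // order_dvdn expg_lcn3.
have := leq_trans card_lcn3_ge card_lcn3_le.
move/leq_trans/(_ (leq_mul (leqnn _) (leq_trans (subset_leq_card sL4z) le_z))).
by rewrite -expnSr leq_exp2l.
Qed.

End ClassAtMostFour.

Section ClassAtLeastSix.

Hypotheses (p_ge7 : 7 <= p) (L6 : 'L_6(G) != 1).
Local Notation z := ([~ a, b] ^+ p).

Lemma lcn_proper k : 0 < k < 7 -> 'L_k.+1(G) \proper 'L_k(G).
Proof.
case: k => // k lt_k6; rewrite lcnSn.
apply: nil_comm_properl nilG (lcn_sub _ G) _ _; last by rewrite subsetI subxx lcn_norm.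
by apply: contraNneq L6 => Lk1; rewrite -subG1 -Lk1 lcn_sub_leq.
Qed.

Lemma logn_card_lcn k : 1 < k < 8 -> logn p #|'L_k(G)| = 7 - k.
Proof.
suff chain (e : nat -> nat) : e 2 = 5 -> (forall j, 1 < j < 7 -> e j.+1 < e j) ->
    forall i, 1 < i < 8 -> e i = 7 - i.
  apply: (chain (fun j => logn p #|'L_j(G)|)); first by rewrite /= lcn2 oG' pfactorK.
  move=> j /andP[j_gt1 j_lt7]; rewrite -(ltn_exp2l _ _ p_gt1) -!card_pgroup ?pL //.
  by rewrite proper_card // lcn_proper // ltnW.
move=> e2 lt_e i; clear -e2 lt_e.
have := lt_e 2 isT; have := lt_e 3 isT; have := lt_e 4 isT; have := lt_e 5 isT.
have := lt_e 6 isT.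
by case: i => [|[|[|[|[|[|[|[|[]]]]]]]]] // *; lia.
Qed.

Lemma lcn7_trivial : 'L_7(G) = 1.
Proof. by apply/eqP; rewrite trivg_card1 (card_pgroup (pL 7)) logn_card_lcn. Qed.

Lemma card_lcn_le k : 1 < k < 7 -> #|'L_k(G)| <= p * #|'L_k.+1(G)|.
Proof.
case/andP=> k_gt1 k_lt7.
have e_k : logn p #|'L_k(G)| = 7 - k by rewrite logn_card_lcn // k_gt1 ltnW.
have e_k1 : logn p #|'L_k.+1(G)| = 7 - k.+1 by rewrite logn_card_lcn // (leqW k_gt1).
by rewrite (card_pgroup (pL k)) (card_pgroup (pL k.+1)) e_k e_k1 -expnS subnSK.
Qed.

Lemma mem_lcn_succ k w : k < 4 -> w \in 'L_k.+2(G) ->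
  [~ w, a] \in 'L_k.+4(G) -> [~ w, b] \in 'L_k.+4(G) -> w \in 'L_k.+3(G).
Proof.
move=> lt_k4 Lw wa wb; apply: contraT => L'w.
have defL : [set w] <*> 'L_k.+3(G) = 'L_k.+2(G).
  exact: (joing_set1_lcn (card_lcn_le (k := k.+2) (ltnW lt_k4)) Lw L'w).
have : 'L_k.+3(G) \subset 'L_k.+4(G).
  apply: (lcn_sub_gen (k := k.+1) (T := [set w])); rewrite ?lcn_norm ?defL //.
    by rewrite sub1set (subsetP (lcn_sub k.+2 G)).
  by move=> _ /set1P->.
by rewrite (negPf (proper_subn (lcn_proper (k := k.+3) lt_k4))).
Qed.

Let Lp1 : 'L_p.+1(G) = 1.
Proof. by apply/trivgP; rewrite -lcn7_trivial lcn_sub_leq // ltnW. Qed.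

Lemma mem_lcn5 w : w \in G^`(1) -> [~ w, a] \in 'L_6(G) -> [~ w, b] \in 'L_6(G) ->
  w \in 'L_5(G).
Proof.
move=> G'w wa wb; have L6L k : k <= 6 -> {subset 'L_6(G) <= 'L_k(G)}.
  by move=> le_k6; apply/subsetP/lcn_sub_leq.
have L3w := mem_lcn_succ (k := 0) isT G'w (L6L 4 isT _ wa) (L6L 4 isT _ wb).
have L4w := mem_lcn_succ (k := 1) isT L3w (L6L 5 isT _ wa) (L6L 5 isT _ wb).
exact: (mem_lcn_succ (k := 2) isT L4w wa wb).
Qed.

Lemma comm_expg_lcn6 : z \in 'L_6(G).
Proof.
have za x : x \in G -> [~ z, x] = 1 by apply: comm_center comm_expg_center.
have L4z : z \in 'L_4(G).
  by apply: (mem_lcn_succ (k := 1)); rewrite ?comm_expg_lcn3 ?za.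
have L5z : z \in 'L_5(G) by apply: (mem_lcn_succ (k := 2)); rewrite ?za.
by apply: (mem_lcn_succ (k := 3)); rewrite ?za.
Qed.

Lemma class_at_least_6_absurd : False.
Proof.
set u := a ^+ p; set v := b ^+ p.
have ua : [~ u, a] = 1 := commXgg a p.
have vb : [~ v, b] = 1 := commXgg b p.
have ub : [~ u, b] = z := comm_expgl Lp1.
have va : [~ v, a] = z^-1 := comm_expgr Lp1.
have z_neq1 : z != 1 := comm_expg_neq1.
have L6z := comm_expg_lcn6.
have L5u : u \in 'L_5(G) by apply: mem_lcn5; rewrite ?expg_der1 ?ua ?ub ?group1.
have L5v : v \in 'L_5(G) by apply: mem_lcn5; rewrite ?expg_der1 ?va ?vb ?group1 ?groupV.
have L6'u : u \notin 'L_6(G).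
  by apply: contra z_neq1 => L6u; rewrite -ub (comm_lcn_last lcn7_trivial).
have sL5Ca : 'L_5(G) \subset 'C[a].
  rewrite -(joing_set1_lcn (card_lcn_le (k := 5) isT) L5u L6'u) joing_set1_sub_cent1 //.
  by apply/subsetP=> t L6t; apply/cent1P/commgP/eqP/(comm_lcn_last lcn7_trivial).
have /cent1P/commgP := subsetP sL5Ca v L5v.
by rewrite va invg_eq1 (negPf z_neq1).
Qed.

End ClassAtLeastSix.

Lemma nil_class_ge5 : 5 <= p -> 5 <= nil_class G.
Proof.
move=> p_ge5; rewrite leqNgt; apply/negP=> /(lcn_nil_classP 4 nilG) L5.
exact: class_at_most_4_absurd p_ge5 L5.
Qed.

Lemma nil_class_eq5 : 7 <= p -> nil_class G = 5.
Proof.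
move=> p_ge7; apply/eqP; rewrite eqn_leq nil_class_ge5 ?(leq_trans _ p_ge7) // andbT.
apply/(lcn_nil_classP 5 nilG)/eqP; apply: contraT => L6.
by case: (class_at_least_6_absurd p_ge7 L6).
Qed.

End Generators.

End AbelianDerivedSubgroupOfRank4.

Theorem lemma3p2 (p : nat) (gT : finGroupType) (G : {group gT}) :
  prime p -> 5 <= p -> #|G| = (p ^ 7)%N ->
  abelian (G^`(1)) -> #|G^`(1)| = (p ^ 5)%N -> dgen (G^`(1)) = 4 ->
  5 <= nil_class G /\ (7 <= p -> nil_class G = 5).
Proof.
move=> p_pr p_ge5 oG abG' oG' dG'.
have rG' : 'r(G^`(1)) = 4 by rewrite -grank_abelian.
have [a [b defG]] := two_generated p_pr oG oG'.
split; first exact: (nil_class_ge5 p_pr oG abG' oG' rG' defG p_ge5).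
exact: (nil_class_eq5 p_pr oG abG' oG' rG' defG).
Qed.
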